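(* Let $\mathcal{P}$ be a class of Banach spaces containing all finite-dimensional Banach spaces, and let $\{S_n\}_{n=1}^\infty$ be a sequence of finite metric spaces which is a set of test-spaces for $\mathcal{P}$. (i) If each $S_n$ is (the vertex set of) a connected unweighted graph with its shortest path metric, then there is a connected unweighted graph $S$ (with its shortest path metric) which is a test-space for $\mathcal{P}$. (ii) If each $S_n$ is a tree with its shortest path metric, then $S$ can be chosen to be a tree. (iii) If the $S_n$ are graphs with uniformly bounded degrees, then $S$ can be chosen to be a graph with bounded degrees.
   Context: A set $\{T_\alpha\}_{\alpha\in A}$ of metric spaces is a set of test-spaces for a class $\mathcal{P}$ of Banach spaces if for every Banach space $X$: $X\notin\mathcal{P}$ if and only if the spaces $T_\alpha$ admit bilipschitz embeddings into $X$ with uniformly bounded distortions (distortion of $f$ being $\mathrm{Lip}(f)\cdot\mathrm{Lip}(f^{-1})$). A single space $S$ is a test-space if $\{S\}$ is a set of test-spaces. Graphs are regarded as metric spaces on their vertex sets with the shortest path metric. *)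

From Stdlib Require Import Reals List.
Import ListNotations.
Open Scope R_scope.

Record BanachSpace := {
  bs_car :> Type;
  bs_zero : bs_car;
  bs_add : bs_car -> bs_car -> bs_car;
  bs_opp : bs_car -> bs_car;
  bs_scal : R -> bs_car -> bs_car;
  bs_norm : bs_car -> R;
  bs_addA : forall x y z, bs_add x (bs_add y z) = bs_add (bs_add x y) z;
  bs_addC : forall x y, bs_add x y = bs_add y x;
  bs_add0 : forall x, bs_add x bs_zero = x;
  bs_addN : forall x, bs_add x (bs_opp x) = bs_zero;
  bs_scalA : forall a b x, bs_scal a (bs_scal b x) = bs_scal (a * b) x;
  bs_scal1 : forall x, bs_scal 1 x = x;
  bs_scalDr : forall a x y, bs_scal a (bs_add x y) = bs_add (bs_scal a x) (bs_scal a y);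
  bs_scalDl : forall a b x, bs_scal (a + b) x = bs_add (bs_scal a x) (bs_scal b x);
  bs_norm_ge0 : forall x, 0 <= bs_norm x;
  bs_norm_eq0 : forall x, bs_norm x = 0 -> x = bs_zero;
  bs_normZ : forall a x, bs_norm (bs_scal a x) = Rabs a * bs_norm x;
  bs_normD : forall x y, bs_norm (bs_add x y) <= bs_norm x + bs_norm y;
  bs_complete : forall u : nat -> bs_car,
    (forall eps, 0 < eps -> exists N, forall m n, (N <= m)%nat -> (N <= n)%nat ->
        bs_norm (bs_add (u m) (bs_opp (u n))) < eps) ->
    exists l, forall eps, 0 < eps -> exists N, forall n, (N <= n)%nat ->
        bs_norm (bs_add (u n) (bs_opp l)) < eps
}.

Definition bs_dist (X : BanachSpace) (x y : X) : R :=
  bs_norm X (bs_add X x (bs_opp X y)).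

(** linear combination sum_i c_i b_i (lists truncated to common length) *)
Fixpoint lin_comb (X : BanachSpace) (c : list R) (b : list X) : X :=
  match c, b with
  | a :: c', v :: b' => bs_add X (bs_scal X a v) (lin_comb X c' b')
  | _, _ => bs_zero X
  end.

Definition finite_dimensional (X : BanachSpace) : Prop :=
  exists b : list X, forall x : X, exists c : list R, x = lin_comb X c b.

Record MetricSpace := {
  ms_car :> Type;
  ms_dist : ms_car -> ms_car -> R;
  ms_dist_ge0 : forall x y, 0 <= ms_dist x y;
  ms_dist_eq0 : forall x y, ms_dist x y = 0 <-> x = y;
  ms_dist_sym : forall x y, ms_dist x y = ms_dist y x;
  ms_dist_tri : forall x y z, ms_dist x z <= ms_dist x y + ms_dist y z
}.

Definition finite_metric (M : MetricSpace) : Prop :=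
  exists l : list M, forall x : M, In x l.

Definition lipschitz_with (T : MetricSpace) (X : BanachSpace) (f : T -> X) (L : R) :=
  0 <= L /\ forall x y : T, bs_dist X (f x) (f y) <= L * ms_dist T x y.

Definition inv_lipschitz_with (T : MetricSpace) (X : BanachSpace) (f : T -> X) (L : R) :=
  0 <= L /\ forall x y : T, ms_dist T x y <= L * bs_dist X (f x) (f y).

(** f is a bilipschitz embedding with distortion Lip(f) * Lip(f^{-1}) <= C
    (Lipschitz constants are attained, so this is equivalent to the
    existence of Lipschitz constants L1, L2 of f, f^{-1} with L1*L2 <= C). *)
Definition distortion_le (T : MetricSpace) (X : BanachSpace) (f : T -> X) (C : R) :=
  exists L1 L2, lipschitz_with T X f L1 /\ inv_lipschitz_with T X f L2 /\ L1 * L2 <= C.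

Definition test_spaces (P : BanachSpace -> Prop) {A : Type} (T : A -> MetricSpace) : Prop :=
  forall X : BanachSpace,
    ~ P X <-> exists C : R, forall a : A, exists f : T a -> X, distortion_le (T a) X f C.

Definition test_space (P : BanachSpace -> Prop) (S : MetricSpace) : Prop :=
  test_spaces P (fun _ : unit => S).

Inductive walk {V : Type} (adj : V -> V -> Prop) : V -> V -> nat -> Prop :=
| walk_nil : forall x, walk adj x x 0
| walk_cons : forall x y z n, adj x y -> walk adj y z n -> walk adj x z (S n).

(** M is the vertex set of the (simple, unweighted) graph adj, and the
    metric of M is the shortest path metric; this forces connectedness. *)
Definition graph_metric (M : MetricSpace) (adj : M -> M -> Prop) : Prop :=
  (forall x y, adj x y -> adj y x) /\
  (forall x, ~ adj x x) /\
  (forall x y : M, exists n : nat,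
      ms_dist M x y = INR n /\ walk adj x y n /\
      forall m, walk adj x y m -> (n <= m)%nat).

Fixpoint chain {V : Type} (adj : V -> V -> Prop) (l : list V) : Prop :=
  match l with
  | x :: ((y :: _) as l') => adj x y /\ chain adj l'
  | _ => True
  end.

Definition is_cycle {V : Type} (adj : V -> V -> Prop) (l : list V) : Prop :=
  match l with
  | [] => False
  | v0 :: _ => NoDup l /\ (3 <= length l)%nat /\ chain adj l /\ adj (last l v0) v0
  end.

Definition acyclic {V : Type} (adj : V -> V -> Prop) : Prop :=
  forall l : list V, ~ is_cycle adj l.

Definition tree_metric (M : MetricSpace) (adj : M -> M -> Prop) : Prop :=
  graph_metric M adj /\ acyclic adj.

Definition degree_le {V : Type} (adj : V -> V -> Prop) (D : nat) : Prop :=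
  forall x : V, exists l : list V, (length l <= D)%nat /\ forall y, adj x y -> In y l.

(** When the [S_n] are connected graphs we glue them into one graph, the
    comb: a spine [0 - 1 - 2 - ...], at spine vertex [n] an arm of length
    [h n] (at least the radius of [S_n]), and at the end of this arm a copy
    of [S_n] attached by its base point.

    The comb is a test-space for [P]:
    - its copies of [S_n] are isometric to [S_n] (a 1-Lipschitz retraction
      onto each copy), so an embedding of the comb embeds every [S_n];
    - a space [X] outside [P] is infinite-dimensional and contains all [S_n]
      with uniformly bounded distortion. Normalizing these embeddings and
      choosing, by Riesz's lemma, a unit vector [e] and vectors [w_n] almost
      orthogonal to everything used before, the map sending the spine to
      multiples of [e], the [n]-th arm along [w_n] and the copy of [S_n] to a
      translate of the embedded [S_n] has distortion bounded in terms of the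
      distortion of the [S_n] only. *)

From Stdlib Require Import Reals Lra Lia List Permutation Classical ClassicalEpsilon
  ProofIrrelevance Eqdep_dec Bool Wf_nat.
Import ListNotations.
Open Scope R_scope.

(** Elementary algebra in a Banach space, and a reflexive decision procedure
    for identities between linear expressions: both sides are reified into a
    syntax of linear terms over a list of atoms and compared coefficientwise. *)
Section LinearIdentities.
Variable X : BanachSpace.

Lemma bs_add0l x : bs_add X (bs_zero X) x = x.
Proof. rewrite bs_addC. apply bs_add0. Qed.

Lemma bs_add_cancel x y z : bs_add X x y = bs_add X x z -> y = z.
Proof.
  intro H. rewrite <- (bs_add0l y), <- (bs_add0l z).
  rewrite <- (bs_addN X x), (bs_addC X x).
  rewrite <- !bs_addA. rewrite H. reflexivity.
Qed.

Lemma bs_scal0l x : bs_scal X 0 x = bs_zero X.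
Proof.
  apply (bs_add_cancel (bs_scal X 0 x)).
  rewrite bs_add0, <- bs_scalDl. f_equal. ring.
Qed.

Lemma bs_scal0r a : bs_scal X a (bs_zero X) = bs_zero X.
Proof.
  apply (bs_add_cancel (bs_scal X a (bs_zero X))).
  rewrite bs_add0, <- bs_scalDr, bs_add0. reflexivity.
Qed.

Lemma bs_oppE x : bs_opp X x = bs_scal X (-1) x.
Proof.
  apply (bs_add_cancel x). rewrite bs_addN.
  rewrite <- (bs_scal1 X x) at 1. rewrite <- bs_scalDl.
  replace (1 + -1) with 0 by ring. rewrite bs_scal0l. reflexivity.
Qed.

Lemma bs_add_swap_mid a b c d :
  bs_add X (bs_add X a b) (bs_add X c d) = bs_add X (bs_add X a c) (bs_add X b d).
Proof.
  rewrite !bs_addA. f_equal. rewrite <- !bs_addA. f_equal. apply bs_addC.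
Qed.

Inductive vterm :=
| VVar (i : nat) | VZero | VAdd (a b : vterm) | VOpp (a : vterm) | VScal (r : R) (a : vterm).

Fixpoint vterm_eval (env : list X) (e : vterm) : X :=
  match e with
  | VVar i => nth i env (bs_zero X)
  | VZero => bs_zero X
  | VAdd a b => bs_add X (vterm_eval env a) (vterm_eval env b)
  | VOpp a => bs_opp X (vterm_eval env a)
  | VScal r a => bs_scal X r (vterm_eval env a)
  end.

Fixpoint vterm_coef (e : vterm) (i : nat) : R :=
  match e with
  | VVar j => if Nat.eqb i j then 1 else 0
  | VZero => 0
  | VAdd a b => vterm_coef a i + vterm_coef b i
  | VOpp a => - vterm_coef a i
  | VScal r a => r * vterm_coef a i
  end.

Fixpoint lin_sum (l : list X) (f : nat -> R) : X :=
  match l with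
  | [] => bs_zero X
  | x :: l' => bs_add X (bs_scal X (f O) x) (lin_sum l' (fun i => f (S i)))
  end.

Lemma lin_sum_ext l : forall f g,
  (forall i, (i < length l)%nat -> f i = g i) -> lin_sum l f = lin_sum l g.
Proof.
  induction l as [|x l IH]; intros f g H; simpl; auto.
  rewrite (H O) by (simpl; lia). f_equal. apply IH. intros i Hi; apply H; simpl; lia.
Qed.

Lemma lin_sum_add l : forall f g,
  lin_sum l (fun i => f i + g i) = bs_add X (lin_sum l f) (lin_sum l g).
Proof.
  induction l as [|x l IH]; intros f g; simpl.
  - rewrite bs_add0; auto.
  - rewrite IH, bs_scalDl. apply bs_add_swap_mid.
Qed.

Lemma lin_sum_scal l : forall r f, lin_sum l (fun i => r * f i) = bs_scal X r (lin_sum l f).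
Proof.
  induction l as [|x l IH]; intros r f; simpl.
  - rewrite bs_scal0r; auto.
  - rewrite IH, bs_scalDr, bs_scalA. auto.
Qed.

Lemma lin_sum_zero l : lin_sum l (fun _ => 0) = bs_zero X.
Proof.
  rewrite (lin_sum_ext l _ (fun _ => 0 * 0)) by (intros; ring).
  rewrite lin_sum_scal, bs_scal0l. auto.
Qed.

Lemma lin_sum_delta l : forall j,
  lin_sum l (fun i => if Nat.eqb i j then 1 else 0) = nth j l (bs_zero X).
Proof.
  induction l as [|x l IH]; intros j; simpl.
  - destruct j; auto.
  - destruct j as [|j]; simpl.
    + rewrite bs_scal1, lin_sum_zero, bs_add0. auto.
    + rewrite bs_scal0l, bs_add0l. apply IH.
Qed.

Lemma vterm_eval_normal env e : vterm_eval env e = lin_sum env (vterm_coef e).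
Proof.
  induction e; simpl.
  - rewrite lin_sum_delta. auto.
  - rewrite lin_sum_zero. auto.
  - rewrite lin_sum_add, IHe1, IHe2. auto.
  - rewrite bs_oppE, IHe, <- lin_sum_scal. apply lin_sum_ext. intros; ring.
  - rewrite IHe, <- lin_sum_scal. auto.
Qed.

Lemma vterm_eval_eq env e1 e2 :
  (forall i, (i < length env)%nat -> vterm_coef e1 i = vterm_coef e2 i) ->
  vterm_eval env e1 = vterm_eval env e2.
Proof. intros H. rewrite !vterm_eval_normal. apply lin_sum_ext. auto. Qed.

End LinearIdentities.

Ltac vterm_lookup t env :=
  lazymatch env with
  | ?a :: ?l =>
    lazymatch t with a => constr:(O) | _ => let k := vterm_lookup t l in constr:(S k) end
  end.

Ltac vterm_reify X env t :=
  match t with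
  | bs_add X ?a ?b =>
    let ra := vterm_reify X env a in let rb := vterm_reify X env b in constr:(VAdd ra rb)
  | bs_zero X => constr:(VZero)
  | bs_opp X ?a => let ra := vterm_reify X env a in constr:(VOpp ra)
  | bs_scal X ?r ?a => let ra := vterm_reify X env a in constr:(VScal r ra)
  | _ => let k := vterm_lookup t env in constr:(VVar k)
  end.

(** [vector_eq X atoms] proves an identity between linear expressions in the
    vectors [atoms]; the coefficient equations are closed by [ring]/[field]. *)
Ltac vector_eq X env :=
  match goal with
  | |- ?L = ?R =>
    let e1 := vterm_reify X env L in let e2 := vterm_reify X env R in
    change (vterm_eval X env e1 = vterm_eval X env e2); apply vterm_eval_eq;
    let i := fresh "i" in let Hi := fresh "Hi" in
    intros i Hi; simpl in Hi;
    repeat (first [exfalso; lia | destruct i as [|i]; [simpl; solve [ring | field; auto]|]])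
  end.

(** Norm inequalities, finite-dimensional subspaces and Riesz's lemma. *)
Section Normed.
Variable X : BanachSpace.
Notation "x +: y" := (bs_add X x y) (at level 50, left associativity).
Notation "-: x" := (bs_opp X x) (at level 35).
Notation "a ** x" := (bs_scal X a x) (at level 40).
Notation nm := (bs_norm X).
Notation z0 := (bs_zero X).

Lemma norm_zero : nm z0 = 0.
Proof. rewrite <- (bs_scal0l X z0), bs_normZ, Rabs_R0. ring. Qed.

Lemma norm_opp x : nm (-: x) = nm x.
Proof. rewrite bs_oppE, bs_normZ, Rabs_left by lra. ring. Qed.

Lemma norm_sub_sym x y : nm (x +: -: y) = nm (y +: -: x).
Proof. replace (x +: -: y) with (-: (y +: -: x)) by vector_eq X [x;y]. apply norm_opp. Qed.

Lemma norm_sub_le x y : nm (x +: -: y) <= nm x + nm y.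
Proof. rewrite <- (norm_opp y). apply bs_normD. Qed.

Lemma norm_add_ge x y : nm x - nm y <= nm (x +: y).
Proof.
  assert (H := bs_normD X (x +: y) (-: y)). rewrite norm_opp in H.
  replace (x +: y +: -: y) with x in H by vector_eq X [x;y]. lra.
Qed.

Lemma norm_sub_tri x y z : nm (x +: -: z) <= nm (x +: -: y) + nm (y +: -: z).
Proof.
  replace (x +: -: z) with ((x +: -: y) +: (y +: -: z)) by vector_eq X [x;y;z].
  apply bs_normD.
Qed.

Definition banach_metric : MetricSpace.
Proof.
  refine {| ms_car := bs_car X; ms_dist := bs_dist X |}.
  - intros; apply bs_norm_ge0.
  - intros x y; unfold bs_dist; split; intro H.
    + apply bs_norm_eq0 in H.
      replace x with ((x +: -: y) +: y) by vector_eq X [x;y]. rewrite H. vector_eq X [y].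
    + subst. rewrite bs_addN. apply norm_zero.
  - intros; apply norm_sub_sym.
  - intros; apply norm_sub_tri.
Defined.

Inductive span (l : list X) : X -> Prop :=
| span_in x : In x l -> span l x
| span_zero : span l z0
| span_add x y : span l x -> span l y -> span l (x +: y)
| span_scal a x : span l x -> span l (a ** x).

Lemma span_incl l l' x : incl l l' -> span l x -> span l' x.
Proof.
  intros Hi H; induction H;
    [apply span_in; auto|apply span_zero|apply span_add; auto|apply span_scal; auto].
Qed.

Lemma span_sub l x y : span l x -> span l y -> span l (x +: -: y).
Proof. intros; apply span_add; auto; rewrite bs_oppE; apply span_scal; auto. Qed.

Lemma span_nil x : span [] x -> x = z0.
Proof.
  intro H; induction H.
  - destruct H.
  - auto.
  - subst. vector_eq X (@nil X).
  - subst. apply bs_scal0r.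
Qed.

Lemma span_cons_inv v l x : span (v :: l) x -> exists a z, span l z /\ x = a ** v +: z.
Proof.
  intro H; induction H as [y Hy| |y1 y2 H1 IH1 H2 IH2|c y H1 IH1].
  - destruct Hy as [<-|Hy].
    + exists 1, z0. split; [apply span_zero|]. vector_eq X [v].
    + exists 0, y. split; [apply span_in; auto|]. vector_eq X [y;v].
  - exists 0, z0. split; [apply span_zero|]. vector_eq X [v].
  - destruct IH1 as (a1 & w1 & Hw1 & ->). destruct IH2 as (a2 & w2 & Hw2 & ->).
    exists (a1 + a2), (w1 +: w2). split; [apply span_add; auto|]. vector_eq X [v;w1;w2].
  - destruct IH1 as (a1 & w1 & Hw1 & ->).
    exists (c * a1), (c ** w1). split; [apply span_scal; auto|]. vector_eq X [v;w1].
Qed.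

Lemma span_cons l v a z : span l z -> span (v :: l) (a ** v +: z).
Proof.
  intros. apply span_add.
  - apply span_scal, span_in; left; auto.
  - apply (span_incl l); auto. intros y Hy; right; auto.
Qed.

Lemma span_lin_comb l x : span l x -> exists c, x = lin_comb X c l.
Proof.
  revert x; induction l as [|v l IH]; intros x H.
  - exists []. simpl. apply span_nil; auto.
  - destruct (span_cons_inv v l x H) as (a & z & Hz & ->).
    destruct (IH z Hz) as (c & ->). exists (a :: c). reflexivity.
Qed.

Lemma span_proper : ~ finite_dimensional X -> forall l, exists x, ~ span l x.
Proof.
  intros Hfd l. apply NNPP; intro Hn. apply Hfd. exists l. intro x.
  apply span_lin_comb. apply NNPP; intro Hx. apply Hn. exists x; auto.
Qed.

Definition approximable (l : list X) (x : X) : Prop :=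
  forall eps, 0 < eps -> exists z, span l z /\ nm (x +: -: z) < eps.

Definition span_closed (l : list X) : Prop := forall x, approximable l x -> span l x.

Lemma dist_span_pos l x : span_closed l -> ~ span l x ->
  exists d, 0 < d /\ forall z, span l z -> d <= nm (x +: -: z).
Proof.
  intros Hcl Hx. apply NNPP; intro Hn. apply Hx, Hcl. intros eps He.
  apply NNPP; intro Hz. apply Hn. exists eps; split; auto. intros z Hz'.
  apply Rnot_lt_le; intro Hlt. apply Hz. exists z; auto.
Qed.

Lemma inv_succ_small eps : 0 < eps -> exists N : nat, forall k, (N <= k)%nat -> / (INR k + 1) < eps.
Proof.
  intros He. destruct (INR_unbounded (/ eps)) as [N HN]. exists N. intros k Hk.
  assert (INR N <= INR k) by (apply le_INR; auto).
  assert (0 < / eps) by (apply Rinv_0_lt_compat; auto).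
  rewrite <- (Rinv_inv eps). apply Rinv_lt_contravar.
  - apply Rmult_lt_0_compat; auto. lra.
  - lra.
Qed.

Lemma span_closed_nil : span_closed [].
Proof.
  intros x H. assert (Hx : nm x = 0).
  { apply Rle_antisym; [|apply bs_norm_ge0]. apply Rnot_lt_le; intro Hlt.
    destruct (H _ Hlt) as (z & Hz & Hn). apply span_nil in Hz; subst.
    replace (x +: -: z0) with x in Hn by vector_eq X [x]. lra. }
  apply bs_norm_eq0 in Hx; subst; apply span_zero.
Qed.

Lemma span_closed_cons_dep l v : span_closed l -> span l v -> span_closed (v :: l).
Proof.
  intros Hcl Hv x H. apply (span_incl l); [intros y Hy; right; auto|].
  apply Hcl. intros eps He. destruct (H eps He) as (z & Hz & Hn).
  destruct (span_cons_inv v l z Hz) as (a & w & Hw & ->).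
  exists (a ** v +: w). split; auto. apply span_add; auto. apply span_scal; auto.
Qed.

Lemma span_coef_bound l v d : (forall z, span l z -> d <= nm (v +: -: z)) ->
  forall a z, span l z -> Rabs a * d <= nm (a ** v +: z).
Proof.
  intros Hd a z Hz. destruct (Req_dec a 0) as [->|Ha].
  - rewrite Rabs_R0, Rmult_0_l. apply bs_norm_ge0.
  - replace (a ** v +: z) with (a ** (v +: -: ((- / a) ** z))) by vector_eq X [v;z].
    rewrite bs_normZ. apply Rmult_le_compat_l; [apply Rabs_pos|].
    apply Hd. apply span_scal; auto.
Qed.

Lemma approximating_sequence l v x : approximable (v :: l) x ->
  exists (a : nat -> R) (w : nat -> X), (forall k, span l (w k)) /\
    forall k, nm (x +: -: (a k ** v +: w k)) < / (INR k + 1).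
Proof.
  intro Hx.
  assert (Happrox : forall k : nat, exists p : R * X, span l (snd p) /\
                 nm (x +: -: (fst p ** v +: snd p)) < / (INR k + 1)).
  { intro k.
    assert (Hk : 0 < / (INR k + 1)) by (apply Rinv_0_lt_compat; pose proof (pos_INR k); lra).
    destruct (Hx _ Hk) as (z & Hz & Hn). destruct (span_cons_inv v l z Hz) as (a & w & Hw & ->).
    exists (a, w). simpl; auto. }
  set (seq := fun k => proj1_sig (constructive_indefinite_description _ (Happrox k))).
  exists (fun k => fst (seq k)), (fun k => snd (seq k)).
  split; intro k; apply (proj2_sig (constructive_indefinite_description _ (Happrox k))).
Qed.

(** Adding an independent vector [v] to a closed span keeps it closed: by
    [span_coef_bound] the coefficients of [v] in approximations of [x] form a
    Cauchy sequence; with [al] its limit, [x - al v] lies in the closure of,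
    hence in, [span l]. *)
Lemma span_closed_cons_indep l v : span_closed l -> ~ span l v -> span_closed (v :: l).
Proof.
  intros Hcl Hv x Hx.
  destruct (dist_span_pos l v Hcl Hv) as (d & Hd0 & Hd).
  destruct (approximating_sequence l v x Hx) as (a & w & Hw & Ha).
  assert (a_cauchy : Cauchy_crit a).
  { intros eps He. destruct (inv_succ_small (eps * d / 2)) as [N HN].
    { apply Rmult_lt_0_compat; [apply Rmult_lt_0_compat|]; lra. }
    exists N. intros j k Hj Hk. unfold Rdist.
    assert (Hjk : Rabs (a j - a k) * d <= / (INR j + 1) + / (INR k + 1)).
    { eapply Rle_trans. apply (span_coef_bound l v d Hd _ (w j +: -: w k)). apply span_sub; auto.
      replace ((a j - a k) ** v +: (w j +: -: w k)) with
        ((x +: -: (a k ** v +: w k)) +: -: (x +: -: (a j ** v +: w j)))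
        by vector_eq X [x;v;w j;w k].
      eapply Rle_trans. apply norm_sub_le. pose proof (Ha j); pose proof (Ha k); lra. }
    specialize (HN j Hj) as H1. specialize (HN k Hk) as H2.
    apply (Rmult_lt_reg_r d); auto. lra. }
  destruct (R_complete a a_cauchy) as [al Hal].
  replace x with (al ** v +: (x +: -: (al ** v))) by vector_eq X [x;v].
  apply span_cons. apply Hcl. intros eps He.
  destruct (inv_succ_small (eps / 2)) as [N1 HN1]; [lra|].
  destruct (Hal (eps / 2 / (nm v + 1))) as [N2 HN2].
  { pose proof (bs_norm_ge0 X v). apply Rdiv_lt_0_compat; lra. }
  set (k := Nat.max N1 N2).
  exists (w k). split; auto.
  replace (x +: -: (al ** v) +: -: w k) with ((x +: -: (a k ** v +: w k)) +: ((a k - al) ** v))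
    by vector_eq X [x;v;w k].
  eapply Rle_lt_trans. apply bs_normD. rewrite bs_normZ.
  specialize (Ha k). specialize (HN1 k ltac:(lia)). specialize (HN2 k ltac:(lia)).
  unfold Rdist in HN2. pose proof (bs_norm_ge0 X v).
  assert (Rabs (a k - al) * nm v <= Rabs (a k - al) * (nm v + 1)) by
    (apply Rmult_le_compat_l; [apply Rabs_pos|lra]).
  assert (Rabs (a k - al) * (nm v + 1) < eps / 2).
  { apply (Rmult_lt_compat_r (nm v + 1)) in HN2; [|lra].
    unfold Rdiv in HN2. rewrite Rmult_assoc, Rinv_l in HN2 by lra. lra. }
  lra.
Qed.

Lemma span_closed_all l : span_closed l.
Proof.
  induction l as [|v l IH]; [apply span_closed_nil|].
  destruct (classic (span l v)).
  - apply span_closed_cons_dep; auto.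
  - apply span_closed_cons_indep; auto.
Qed.

Definition riesz_vector (l : list X) (u : X) : Prop :=
  nm u = 1 /\ forall z, span l z -> / 2 <= nm (u +: -: z).

Lemma near_best_approx l x d0 : 0 < d0 -> (forall z, span l z -> d0 <= nm (x +: -: z)) ->
  exists d z1, 0 < d /\ (forall z, span l z -> d <= nm (x +: -: z)) /\
               span l z1 /\ nm (x +: -: z1) < 2 * d.
Proof.
  intros Hd0 Hd.
  set (E := fun r => exists z, span l z /\ r = - nm (x +: -: z)).
  assert (HE : bound E)
    by (exists 0; intros r (z & _ & ->); pose proof (bs_norm_ge0 X (x +: -: z)); lra).
  assert (HE2 : exists r, E r) by (exists (- nm (x +: -: z0)); exists z0; split; auto; apply span_zero).
  destruct (completeness E HE HE2) as [m [Hm1 Hm2]].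
  assert (Hdm : d0 <= - m).
  { assert (m <= - d0); [|lra]. apply Hm2. intros r (z & Hz & ->). specialize (Hd z Hz). lra. }
  assert (Hlow : forall z, span l z -> - m <= nm (x +: -: z)).
  { intros z Hz. assert (- nm (x +: -: z) <= m); [|lra]. apply Hm1. exists z; auto. }
  assert (Hz1 : exists z, span l z /\ nm (x +: -: z) < 2 * - m).
  { apply NNPP; intro Hn. assert (m <= - (2 * - m)); [|lra].
    apply Hm2. intros r (z & Hz & ->). apply Ropp_le_contravar. apply Rnot_lt_le.
    intro Hlt. apply Hn. exists z; auto. }
  destruct Hz1 as (z1 & Hz1 & Hn1). exists (- m), z1. repeat split; auto. lra.
Qed.

Lemma riesz : ~ finite_dimensional X -> forall l, exists u, riesz_vector l u.
Proof.
  intros Hfd l. destruct (span_proper Hfd l) as [x Hx].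
  destruct (dist_span_pos l x (span_closed_all l) Hx) as (d0 & Hd0 & Hd).
  destruct (near_best_approx l x d0 Hd0 Hd) as (d & z1 & Hdpos & Hlow & Hz1 & Hn1).
  set (r := nm (x +: -: z1)).
  assert (Hr : d <= r) by (apply Hlow; auto).
  assert (Hr0 : r <> 0) by lra.
  exists (/ r ** (x +: -: z1)). split.
  - rewrite bs_normZ. fold r. rewrite Rabs_pos_eq by (left; apply Rinv_0_lt_compat; lra).
    field; auto.
  - intros z Hz.
    replace (/ r ** (x +: -: z1) +: -: z) with (/ r ** (x +: -: (z1 +: r ** z)))
      by vector_eq X [x;z1;z].
    rewrite bs_normZ. rewrite Rabs_pos_eq by (left; apply Rinv_0_lt_compat; lra).
    assert (Hq : d <= nm (x +: -: (z1 +: r ** z)))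
      by (apply Hlow; apply span_add; auto; apply span_scal; auto).
    apply (Rmult_le_reg_l r); [lra|]. rewrite <- Rmult_assoc, Rinv_r by auto.
    assert (r < 2 * d) by (unfold r; lra). lra.
Qed.

Lemma riesz_vector_bound l u a z :
  riesz_vector l u -> span l z -> (Rabs a + nm z) / 5 <= nm (a ** u +: z).
Proof.
  intros [Hu Ht] Hz.
  assert (H1 := span_coef_bound l u (/ 2) Ht a z Hz).
  assert (H2 := norm_add_ge z (a ** u)). rewrite bs_normZ, Hu, bs_addC in H2.
  lra.
Qed.

End Normed.

(** Walks, and the shortest-path metric of a connected graph. *)

Lemma walk_snoc {V} (adj : V -> V -> Prop) x y z n :
  walk adj x y n -> adj y z -> walk adj x z (S n).
Proof. intros H; induction H; intros; econstructor; eauto; constructor. Qed.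

Lemma walk_app {V} (adj : V -> V -> Prop) x y z n m :
  walk adj x y n -> walk adj y z m -> walk adj x z (n + m).
Proof. intros H; induction H; intros; simpl; auto. econstructor; eauto. Qed.

Lemma walk_rev {V} (adj : V -> V -> Prop) (Hs : forall x y, adj x y -> adj y x) x y n :
  walk adj x y n -> walk adj y x n.
Proof. intros H; induction H. constructor. eapply walk_snoc; eauto. Qed.

Lemma walk_map {V W} (adj : V -> V -> Prop) (adj' : W -> W -> Prop) (f : V -> W)
  (Hf : forall x y, adj x y -> adj' (f x) (f y)) x y n :
  walk adj x y n -> walk adj' (f x) (f y) n.
Proof. intros H; induction H; econstructor; eauto. Qed.

Lemma walk_dist_le (M : MetricSpace) {V} (adj : V -> V -> Prop) (f : V -> M)
  (Hf : forall x y, adj x y -> ms_dist M (f x) (f y) <= 1) x y n :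
  walk adj x y n -> ms_dist M (f x) (f y) <= INR n.
Proof.
  intros H; induction H.
  - rewrite (proj2 (ms_dist_eq0 M _ _) eq_refl). simpl; lra.
  - rewrite S_INR. eapply Rle_trans. apply (ms_dist_tri M _ (f y)). specialize (Hf _ _ H). lra.
Qed.

Lemma graph_dist_le_walk (M : MetricSpace) adj : graph_metric M adj ->
  forall x y n, walk adj x y n -> ms_dist M x y <= INR n.
Proof.
  intros (_ & _ & H) x y n Hw. destruct (H x y) as (k & -> & _ & Hk). apply le_INR; auto.
Qed.

Lemma graph_dist_adj (M : MetricSpace) adj : graph_metric M adj ->
  forall x y, adj x y -> ms_dist M x y <= 1.
Proof.
  intros Hg x y Ha. replace 1 with (INR 1) by reflexivity. apply (graph_dist_le_walk M adj Hg).
  econstructor; eauto. constructor.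
Qed.

Lemma graph_dist_walk (M : MetricSpace) adj : graph_metric M adj ->
  forall x y, exists k, ms_dist M x y = INR k /\ walk adj x y k.
Proof. intros (_ & _ & H) x y. destruct (H x y) as (k & ? & ? & _). eauto. Qed.

Lemma least_witness (P : nat -> Prop) :
  (exists n, P n) -> exists n, P n /\ forall m, P m -> (n <= m)%nat.
Proof.
  intros [n Hn]. revert Hn. induction n as [n IH] using (well_founded_induction lt_wf). intro Hn.
  destruct (classic (exists m, (m < n)%nat /\ P m)) as [[m [Hm1 Hm2]]|Hno].
  - apply (IH m Hm1 Hm2).
  - exists n. split; auto. intros m Hm. destruct (Nat.lt_ge_cases m n); auto. exfalso; eauto.
Qed.

Section PathMetric.
Variables (V : Type) (adj : V -> V -> Prop).
Hypothesis adj_sym : forall x y, adj x y -> adj y x.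
Hypothesis adj_irrefl : forall x, ~ adj x x.
Hypothesis connected : forall x y, exists n, walk adj x y n.

Definition path_len (x y : V) : nat :=
  proj1_sig (constructive_indefinite_description _ (least_witness _ (connected x y))).

Lemma path_len_spec x y :
  walk adj x y (path_len x y) /\ forall m, walk adj x y m -> (path_len x y <= m)%nat.
Proof. unfold path_len. destruct (constructive_indefinite_description _ _) as [n Hn]. auto. Qed.

Definition path_metric : MetricSpace.
Proof.
  refine {| ms_car := V; ms_dist := fun x y => INR (path_len x y) |}.
  - intros; apply pos_INR.
  - intros x y. split.
    + intro H. replace 0 with (INR 0) in H by reflexivity. apply INR_eq in H.
      destruct (path_len_spec x y) as [Hw _]. rewrite H in Hw. inversion Hw; auto.
    + intros ->. destruct (path_len_spec y y) as [_ Hm]. specialize (Hm 0%nat (walk_nil _ _)).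
      replace (path_len y y) with 0%nat by lia. reflexivity.
  - intros x y. f_equal. apply Nat.le_antisymm.
    + apply (proj2 (path_len_spec x y)). apply walk_rev; auto. apply path_len_spec.
    + apply (proj2 (path_len_spec y x)). apply walk_rev; auto. apply path_len_spec.
  - intros x y z. rewrite <- plus_INR. apply le_INR. apply (proj2 (path_len_spec x z)).
    eapply walk_app; apply path_len_spec.
Defined.

Lemma path_metric_graph : graph_metric path_metric adj.
Proof.
  split; [auto|split; [auto|]]. intros x y. exists (path_len x y).
  split; [reflexivity|]. apply path_len_spec.
Qed.

End PathMetric.

Section Cycles.
Variables (V : Type) (adj : V -> V -> Prop).
Hypothesis adj_sym : forall x y, adj x y -> adj y x.

Lemma chain_split l1 x l2 :
  chain adj (l1 ++ x :: l2) <-> chain adj (l1 ++ [x]) /\ chain adj (x :: l2).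
Proof.
  induction l1 as [|a l1 IH]; simpl.
  - destruct l2; simpl; tauto.
  - destruct l1 as [|c l1]; simpl in *.
    + destruct l2; simpl; tauto.
    + rewrite IH. tauto.
Qed.

Lemma chain_tl x l : chain adj (x :: l) -> chain adj l.
Proof. destruct l; simpl; tauto. Qed.

Lemma chain_prefix l1 l2 : chain adj (l1 ++ l2) -> chain adj l1.
Proof.
  induction l1 as [|a l1 IH]; [simpl; auto|].
  destruct l1 as [|c l1]; [simpl; auto|]. simpl. intros [H1 H2]; split; auto. apply IH. exact H2.
Qed.

Lemma last_in (l : list V) d : l <> [] -> In (last l d) l.
Proof.
  induction l as [|a l IH]; intros H; [congruence|]. destruct l as [|c l].
  - left; auto.
  - right. apply IH. discriminate.
Qed.

Lemma chain_snoc_last l y : l <> [] -> chain adj (l ++ [y]) -> adj (last l y) y.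
Proof.
  induction l as [|a l IH]; intros H; [congruence|]. destruct l as [|c l]; simpl.
  - tauto.
  - intros [_ H2]. apply IH; auto. discriminate.
Qed.

Lemma chain_snoc l y : chain adj l -> l <> [] -> adj (last l y) y -> chain adj (l ++ [y]).
Proof.
  induction l as [|a l IH]; intros Hc Hn Ha; [congruence|].
  destruct l as [|c l]; simpl in *; [tauto|].
  destruct Hc as [H1 H2]. split; auto. apply IH; auto. discriminate.
Qed.

Definition closed_chain (l : list V) : Prop :=
  match l with [] => False | v :: _ => chain adj (l ++ [v]) end.

Lemma cycle_closed_chain l : is_cycle adj l -> NoDup l /\ (3 <= length l)%nat /\ closed_chain l.
Proof.
  destruct l as [|v r]; simpl; [tauto|]. intros (H1 & H2 & H3 & H4). repeat split; auto.
  change (chain adj ((v :: r) ++ [v])). apply chain_snoc; auto. discriminate.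
Qed.

Lemma closed_chain_rotate l v : NoDup l -> closed_chain l -> In v l ->
  exists r, NoDup (v :: r) /\ length (v :: r) = length l /\ chain adj (v :: r ++ [v]) /\
            forall x, In x l <-> In x (v :: r).
Proof.
  intros Hn Hc Hv. destruct (in_split _ _ Hv) as (pre & post & ->).
  exists (post ++ pre). split; [|split; [|split]].
  - eapply Permutation_NoDup; [|exact Hn].
    change (v :: post ++ pre) with ((v :: post) ++ pre). apply Permutation_app_comm.
  - rewrite !length_app. simpl. rewrite length_app. lia.
  - destruct pre as [|p0 pre'].
    + simpl in *. rewrite app_nil_r. auto.
    + simpl in Hc. rewrite <- app_assoc in Hc. simpl in Hc.
      change (chain adj ((p0 :: pre') ++ v :: (post ++ [p0]))) in Hc.
      apply chain_split in Hc as [Hc1 Hc2].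
      rewrite <- app_assoc. change (chain adj ((v :: post) ++ p0 :: (pre' ++ [v]))).
      apply chain_split. split; auto.
  - intros x. rewrite !in_app_iff. simpl. rewrite in_app_iff. tauto.
Qed.

Lemma cycle_two_neighbours v r : (2 <= length r)%nat -> NoDup (v :: r) ->
  chain adj (v :: r ++ [v]) ->
  exists h t, adj v h /\ adj v t /\ h <> t /\ In h r /\ In t r.
Proof.
  intros Hl Hn Hc. destruct r as [|h r']; simpl in Hl; [lia|].
  exists h, (last (h :: r') v). simpl in Hc. destruct Hc as [Hvh Hc].
  assert (Ht : adj (last (h :: r') v) v) by (apply chain_snoc_last; [discriminate|auto]).
  split; [auto|split; [auto|split]].
  - assert (Hh : ~ In h r') by (inversion Hn as [|? ? _ Hn']; inversion Hn'; auto).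
    intro He. destruct r' as [|c r'']; simpl in Hl; [lia|].
    apply Hh. rewrite He. change (In (last (c :: r'') v) (c :: r'')). apply last_in. discriminate.
  - split; [left; auto|]. apply last_in. discriminate.
Qed.

Lemma chain_side_const (side : V -> Prop) a m :
  (forall x y, adj x y -> side x -> ~ side y -> x = a) ->
  chain adj m -> ~ In a m -> forall x y, In x m -> In y m -> (side x <-> side y).
Proof.
  intros Hc. induction m as [|x0 m IH]; intros Hch Ha x y Hx Hy; [destruct Hx|].
  assert (Hall : forall z, In z m -> (side x0 <-> side z)).
  { destruct m as [|x1 m']; [intros z []|]. simpl in Hch. destruct Hch as [H01 Hch].
    assert (E : side x0 <-> side x1).
    { split; intro Hs; apply NNPP; intro Hns.
      - apply Ha. left. eapply Hc; eauto.
      - apply Ha. right; left. eapply Hc; eauto. }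
    intros z Hz. rewrite E. apply IH; auto. intro; apply Ha; right; auto. left; auto. }
  destruct Hx as [<-|Hx], Hy as [<-|Hy]; try tauto.
  - apply Hall; auto.
  - rewrite <- Hall; auto. tauto.
  - rewrite <- (Hall x Hx), <- (Hall y Hy). tauto.
Qed.

Lemma cycle_no_bridge (side : V -> Prop) a b l :
  (forall x y, adj x y -> side x -> ~ side y -> x = a /\ y = b) ->
  side a -> is_cycle adj l -> (exists x, In x l /\ side x) -> (exists y, In y l /\ ~ side y) ->
  False.
Proof.
  intros Hc Sa Hcyc [x [Hx Sx]] [y [Hy Sy]]. apply cycle_closed_chain in Hcyc as (Hn & Hl & Hcw).
  assert (Hc' : forall x y, adj x y -> side x -> ~ side y -> x = a) by (intros; eapply Hc; eauto).
  assert (Ha : In a l).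
  { apply NNPP; intro Ha. destruct l as [|v r]; [destruct Hx|].
    assert (E := chain_side_const side a ((v :: r) ++ [v]) Hc' Hcw).
    assert (Hna : ~ In a ((v :: r) ++ [v])).
    { intro Hi. apply Ha. apply in_app_iff in Hi. destruct Hi as [Hi|[<-|[]]]; auto. left; auto. }
    apply Sy. apply (E Hna x y); auto; apply in_app_iff; auto. }
  destruct (closed_chain_rotate l a Hn Hcw Ha) as (r & Hnr & Hlr & Hch & Hin).
  assert (Hr : chain adj r) by (apply chain_tl in Hch; eapply chain_prefix; eauto).
  assert (Hna : ~ In a r) by (inversion Hnr; auto).
  assert (Hyr : In y r) by (apply Hin in Hy; destruct Hy as [<-|]; [tauto|auto]).
  destruct (cycle_two_neighbours a r ltac:(simpl in Hlr; lia) Hnr Hch)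
    as (h & t & Hh & Ht & Hne & Hhr & Htr).
  assert (Sh : ~ side h) by (intro; apply Sy; apply (chain_side_const side a r Hc' Hr Hna h y); auto).
  assert (St : ~ side t) by (intro; apply Sy; apply (chain_side_const side a r Hc' Hr Hna t y); auto).
  apply Hne. destruct (Hc a h Hh Sa Sh), (Hc a t Ht Sa St). congruence.
Qed.

Lemma list_argmax (f : V -> nat) l : l <> [] ->
  exists v, In v l /\ forall y, In y l -> (f y <= f v)%nat.
Proof.
  induction l as [|a l IH]; intros H; [congruence|]. destruct l as [|c l].
  - exists a. split; [left; auto|]. intros y [<-|[]]; auto.
  - destruct IH as (v & Hv & Hm); [discriminate|].
    destruct (Compare_dec.le_ge_dec (f a) (f v)).
    + exists v. split; [right; auto|]. intros y [<-|Hy]; auto.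
    + exists a. split; [left; auto|]. intros y [<-|Hy]; auto. specialize (Hm y Hy). lia.
Qed.

(** On the vertices [Q], if every edge joins a vertex to its parent of smaller
    depth, no cycle lies in [Q]: a deepest cycle vertex would have two distinct
    cycle neighbours, both equal to its parent. *)
Lemma parent_depth_acyclic (Q : V -> Prop) (depth : V -> nat) (parent : V -> V) l :
  (forall x y, Q x -> Q y -> adj x y ->
     (y = parent x /\ (depth y < depth x)%nat) \/ (x = parent y /\ (depth x < depth y)%nat)) ->
  (forall x, In x l -> Q x) -> is_cycle adj l -> False.
Proof.
  intros Hd HQ Hcyc. assert (Hc := Hcyc). apply cycle_closed_chain in Hc as (Hn & Hl & Hcw).
  destruct (list_argmax depth l) as (v & Hv & Hm); [destruct l; simpl in Hl; [lia|discriminate]|].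
  destruct (closed_chain_rotate l v Hn Hcw Hv) as (r & Hnr & Hlr & Hch & Hin).
  destruct (cycle_two_neighbours v r ltac:(simpl in Hlr; lia) Hnr Hch)
    as (h & t & Hh & Ht & Hne & Hhr & Htr).
  assert (Qv : Q v) by auto.
  assert (Qh : Q h) by (apply HQ, Hin; right; auto).
  assert (Qt : Q t) by (apply HQ, Hin; right; auto).
  assert (Mh : (depth h <= depth v)%nat) by (apply Hm, Hin; right; auto).
  assert (Mt : (depth t <= depth v)%nat) by (apply Hm, Hin; right; auto).
  apply Hne.
  destruct (Hd v h Qv Qh Hh) as [[E1 _]|[_ L1]]; [|lia].
  destruct (Hd v t Qv Qt Ht) as [[E2 _]|[_ L2]]; [|lia].
  congruence.
Qed.

End Cycles.

(** A point of a type chosen independently of the witness of inhabitation;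
    it serves as the base point of each [S_n]. *)
Definition basept {A : Type} (x : A) : A := epsilon (inhabits x) (fun _ => True).

Lemma basept_const {A : Type} (x y : A) : basept x = basept y.
Proof. unfold basept. f_equal. apply proof_irrelevance. Qed.

Section Comb.
Variable Sp : nat -> MetricSpace.
Variable adjS : forall n, Sp n -> Sp n -> Prop.
Hypothesis HgS : forall n, graph_metric (Sp n) (adjS n).
Variable h : nat -> nat.

Inductive vertex : Type :=
| Arm (n t : nat) (H : Nat.leb t (h n) = true)
| Copy (n : nat) (x : Sp n).

Inductive comb_edge : vertex -> vertex -> Prop :=
| edge_spine n H1 H2 : comb_edge (Arm n 0 H1) (Arm (S n) 0 H2)
| edge_arm n t H1 H2 : comb_edge (Arm n t H1) (Arm n (S t) H2)
| edge_attach n H x : x = basept x -> comb_edge (Arm n (h n) H) (Copy n x)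
| edge_copy n x y : adjS n x y -> comb_edge (Copy n x) (Copy n y).

Definition comb_adj (p q : vertex) : Prop := comb_edge p q \/ comb_edge q p.

Lemma arm_eq n t H1 H2 : Arm n t H1 = Arm n t H2.
Proof. f_equal. apply UIP_dec. apply bool_dec. Qed.

Lemma arm_inj n t H m s H' : Arm n t H = Arm m s H' -> n = m /\ t = s.
Proof. intro E. injection E; auto. Qed.

Lemma copy_level_inj n x m y : Copy n x = Copy m y -> n = m.
Proof. intro E. injection E; auto. Qed.

Lemma copy_inj n x y : Copy n x = Copy n y -> x = y.
Proof. intro H. injection H as E. apply inj_pair2_eq_dec in E; auto. apply Nat.eq_dec. Qed.

Lemma leb_of t k : (t <= k)%nat -> Nat.leb t k = true.
Proof. apply Nat.leb_le. Qed.

Definition arm_top (n : nat) : vertex := Arm n (h n) (leb_of _ _ (le_n _)).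
Definition spine (n : nat) : vertex := Arm n 0 eq_refl.

Lemma comb_edge_cases p q : comb_edge p q ->
  (exists n H1 H2, p = Arm n 0 H1 /\ q = Arm (S n) 0 H2) \/
  (exists n t H1 H2, p = Arm n t H1 /\ q = Arm n (S t) H2) \/
  (exists n H x, x = basept x /\ p = Arm n (h n) H /\ q = Copy n x) \/
  (exists n x y, adjS n x y /\ p = Copy n x /\ q = Copy n y).
Proof. intro H; destruct H; [left|right; left|right; right; left|right; right; right]; eauto 10. Qed.

Lemma copy_edge_inv n x y : comb_edge (Copy n x) (Copy n y) -> adjS n x y.
Proof.
  intro H. destruct (comb_edge_cases _ _ H) as
    [(? & ? & ? & E1 & _)|[(? & ? & ? & ? & E1 & _)|[(? & ? & ? & _ & E1 & _)|(m & x1 & y1 & Hxy & E1 & E2)]]];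
    try discriminate.
  assert (n = m) by (eapply copy_level_inj; eauto). subst m.
  apply copy_inj in E1. apply copy_inj in E2. subst. auto.
Qed.

Lemma adjS_sym n x y : adjS n x y -> adjS n y x.
Proof. destruct (HgS n) as (Hs & _). auto. Qed.

Lemma comb_adj_sym p q : comb_adj p q -> comb_adj q p.
Proof. unfold comb_adj; tauto. Qed.

Lemma comb_adj_irrefl p : ~ comb_adj p p.
Proof.
  assert (Hirr : ~ comb_edge p p).
  { intro H. destruct p as [n t Ht|n x].
    - destruct (comb_edge_cases _ _ H) as
        [(? & ? & ? & E1 & E2)|[(? & ? & ? & ? & E1 & E2)|[(? & ? & ? & _ & E1 & E2)|(? & ? & ? & _ & E1 & E2)]]];
        try discriminate; rewrite E1 in E2; apply arm_inj in E2; lia.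
    - apply copy_edge_inv in H. destruct (HgS n) as (_ & Hi & _). eapply Hi; eauto. }
  intros [H|H]; auto.
Qed.

Lemma copy_adj_inv n x y : comb_adj (Copy n x) (Copy n y) -> adjS n x y.
Proof. intros [H|H]; apply copy_edge_inv in H; auto. apply adjS_sym; auto. Qed.

Lemma arm_walk n k : forall t t' H1 H2, t' = (t + k)%nat -> walk comb_adj (Arm n t H1) (Arm n t' H2) k.
Proof.
  induction k as [|k IH]; intros t t' H1 H2 Ht.
  - rewrite Nat.add_0_r in Ht. subst t'. rewrite (arm_eq n t H1 H2). constructor.
  - assert (Hs : Nat.leb (S t) (h n) = true) by (apply leb_of; apply Nat.leb_le in H2; lia).
    apply walk_cons with (Arm n (S t) Hs). left. constructor. apply IH. lia.
Qed.

Lemma spine_walk k : forall n n' H1 H2, n' = (n + k)%nat -> walk comb_adj (Arm n 0 H1) (Arm n' 0 H2) k.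
Proof.
  induction k as [|k IH]; intros n n' H1 H2 Hn.
  - subst n'. replace (n + 0)%nat with n by lia. rewrite (arm_eq n 0 H1 H2). constructor.
  - apply walk_cons with (Arm (S n) 0 eq_refl). left. constructor. apply IH. lia.
Qed.

Lemma copy_walk n x y k : walk (adjS n) x y k -> walk comb_adj (Copy n x) (Copy n y) k.
Proof. apply walk_map. intros a b Hab. left. constructor; auto. Qed.

Lemma attach_adj n x : comb_adj (arm_top n) (Copy n (basept x)).
Proof. left. constructor. apply basept_const. Qed.

Lemma walk_to_origin p : exists k, walk comb_adj p (spine 0) k.
Proof.
  assert (HA : forall n t H, exists k, walk comb_adj (Arm n t H) (spine 0) k).
  { intros n t H. exists (t + n)%nat. eapply walk_app.
    - apply walk_rev. apply comb_adj_sym. apply (arm_walk n t 0 t eq_refl H). lia.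
    - apply walk_rev. apply comb_adj_sym. apply spine_walk. lia. }
  destruct p as [n t H|n x]; auto.
  destruct (graph_dist_walk (Sp n) (adjS n) (HgS n) x (basept x)) as (k & _ & Hk).
  destruct (HA n (h n) (leb_of _ _ (le_n _))) as [k' Hk'].
  exists (k + S k')%nat. eapply walk_app. apply copy_walk; eauto.
  econstructor; [|exact Hk']. apply comb_adj_sym, attach_adj.
Qed.

Lemma comb_connected p q : exists k, walk comb_adj p q k.
Proof.
  destruct (walk_to_origin p) as [k1 H1], (walk_to_origin q) as [k2 H2]. exists (k1 + k2)%nat.
  eapply walk_app; eauto. apply walk_rev; auto. apply comb_adj_sym.
Qed.

Definition Comb : MetricSpace := path_metric vertex comb_adj comb_adj_sym comb_connected.
Definition dC : vertex -> vertex -> R := ms_dist Comb.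

Lemma comb_graph : graph_metric Comb comb_adj.
Proof. apply path_metric_graph. apply comb_adj_irrefl. Qed.

Lemma dC_walk p q k : walk comb_adj p q k -> dC p q <= INR k.
Proof. intro Hw. exact (graph_dist_le_walk Comb comb_adj comb_graph p q k Hw). Qed.

Lemma dC_sym p q : dC p q = dC q p.
Proof. apply ms_dist_sym. Qed.

Lemma dC_tri p q r : dC p r <= dC p q + dC q r.
Proof. apply ms_dist_tri. Qed.

Lemma dC_arm n t t' H H' : dC (Arm n t H) (Arm n t' H') <= Rabs (INR t - INR t').
Proof.
  destruct (Nat.le_ge_cases t t') as [Hl|Hl].
  - rewrite Rabs_minus_sym, Rabs_pos_eq by (pose proof (le_INR _ _ Hl); lra).
    rewrite <- minus_INR by auto. apply dC_walk. apply arm_walk. lia.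
  - rewrite Rabs_pos_eq by (pose proof (le_INR _ _ Hl); lra).
    rewrite dC_sym, <- minus_INR by auto. apply dC_walk. apply arm_walk. lia.
Qed.

Lemma dC_spine n m : (n <= m)%nat -> dC (spine n) (spine m) <= INR m - INR n.
Proof. intro Hl. rewrite <- minus_INR by auto. apply dC_walk. apply spine_walk. lia. Qed.

Lemma dC_copy n x y : dC (Copy n x) (Copy n y) <= ms_dist (Sp n) x y.
Proof.
  destruct (graph_dist_walk (Sp n) (adjS n) (HgS n) x y) as (k & -> & Hk).
  apply dC_walk. apply copy_walk; auto.
Qed.

Lemma dC_attach n x : dC (arm_top n) (Copy n x) <= 1 + ms_dist (Sp n) (basept x) x.
Proof.
  eapply Rle_trans. apply (dC_tri _ (Copy n (basept x))).
  apply Rplus_le_compat; [|apply dC_copy].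
  replace 1 with (INR 1) by reflexivity. apply dC_walk. econstructor; [|constructor].
  apply attach_adj.
Qed.

(** The retraction of the comb onto the copy of [S_n]: every vertex outside
    the copy goes to the base point. It is 1-Lipschitz, so the copy of [S_n]
    is isometric to [S_n]. *)
Definition retract (n : nat) (x0 : Sp n) (p : vertex) : Sp n :=
  match p with
  | Copy m x => match Nat.eq_dec m n with left e => eq_rect m Sp x n e | right _ => basept x0 end
  | _ => basept x0
  end.

Lemma retract_copy n x0 x : retract n x0 (Copy n x) = x.
Proof.
  simpl. destruct (Nat.eq_dec n n) as [e|ne]; [|congruence].
  rewrite (UIP_refl_nat n e). reflexivity.
Qed.

Lemma dist_refl (M : MetricSpace) (x : M) : ms_dist M x x = 0.
Proof. apply ms_dist_eq0. auto. Qed.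

Lemma retract_edge n x0 p q : comb_adj p q -> ms_dist (Sp n) (retract n x0 p) (retract n x0 q) <= 1.
Proof.
  assert (Hs : forall p q, comb_edge p q -> ms_dist (Sp n) (retract n x0 p) (retract n x0 q) <= 1).
  { clear p q. intros p q Hpq.
    destruct (comb_edge_cases p q Hpq) as [(m & H1 & H2 & -> & ->)|[(m & t & H1 & H2 & -> & ->)|
      [(m & H & x & Hx & -> & ->)|(m & x & y & Hxy & -> & ->)]]]; simpl.
    - rewrite dist_refl; lra.
    - rewrite dist_refl; lra.
    - destruct (Nat.eq_dec m n) as [e|ne].
      + destruct e. simpl. rewrite Hx at 1. rewrite (basept_const x x0), dist_refl. lra.
      + rewrite dist_refl; lra.
    - destruct (Nat.eq_dec m n) as [e|ne].
      + destruct e. simpl. eapply graph_dist_adj; eauto.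
      + rewrite dist_refl; lra. }
  intros [H|H]; [apply Hs; auto|]. rewrite ms_dist_sym. apply Hs; auto.
Qed.

Lemma copy_isometric n x y : dC (Copy n x) (Copy n y) = ms_dist (Sp n) x y.
Proof.
  apply Rle_antisym; [apply dC_copy|].
  destruct comb_graph as (_ & _ & Hg).
  destruct (Hg (Copy n x) (Copy n y)) as (k & Hk & Hwk & _). unfold dC. rewrite Hk.
  rewrite <- (retract_copy n x x) at 1. rewrite <- (retract_copy n x y) at 1.
  apply (walk_dist_le (Sp n) comb_adj (retract n x)); auto. apply retract_edge.
Qed.

End Comb.

Section CombShape.
Variable Sp : nat -> MetricSpace.
Variable adjS : forall n, Sp n -> Sp n -> Prop.
Hypothesis HgS : forall n, graph_metric (Sp n) (adjS n).
Variable h : nat -> nat.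

Notation vertex := (vertex Sp h).
Notation cadj := (comb_adj Sp adjS h).

Lemma leb_pred t k : Nat.leb (S t) k = true -> Nat.leb t k = true.
Proof. intro H. apply Nat.leb_le in H. apply Nat.leb_le. lia. Qed.

Definition parent (p : vertex) : vertex :=
  match p with
  | Arm _ _ n t H =>
    (match t as t' return (Nat.leb t' (h n) = true -> vertex) with
     | S t0 => fun H0 => Arm Sp h n t0 (leb_pred _ _ H0)
     | O => fun _ => match n with S n0 => Arm Sp h n0 0 eq_refl | O => Arm Sp h 0 0 eq_refl end
     end) H
  | _ => p
  end.

Definition depth (p : vertex) : nat :=
  match p with Arm _ _ n t _ => (n + t)%nat | Copy _ _ _ _ => 0%nat end.

Lemma copy_chain n l : chain cadj (map (Copy Sp h n) l) -> chain (adjS n) l.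
Proof.
  induction l as [|a l IH]; simpl; auto. destruct l as [|b l]; simpl; auto.
  intros [H1 H2]. split; [apply (copy_adj_inv Sp adjS HgS h); auto|]. apply IH. exact H2.
Qed.

Lemma last_map {A B} (f : A -> B) (l : list A) d : last (map f l) (f d) = f (last l d).
Proof. induction l as [|a l IH]; simpl; auto. destruct l; simpl in *; auto. Qed.

Lemma copy_cycle n l : is_cycle cadj (map (Copy Sp h n) l) -> is_cycle (adjS n) l.
Proof.
  destruct l as [|v r]; [simpl; tauto|]. intro H.
  cbv beta iota delta [is_cycle] in H. cbv beta iota delta [is_cycle].
  destruct H as (H1 & H2 & H3 & H4). split; [|split; [|split]].
  - apply (NoDup_map_inv (Copy Sp h n)). exact H1.
  - rewrite length_map in H2. exact H2.
  - apply copy_chain. exact H3.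
  - apply (copy_adj_inv Sp adjS HgS h). rewrite last_map in H4. exact H4.
Qed.

Lemma list_of_map {A B} (f : A -> B) (l : list B) :
  (forall y, In y l -> exists z, y = f z) -> exists l', l = map f l'.
Proof.
  induction l as [|a l IH]; intros H.
  - exists []; auto.
  - destruct (H a (or_introl eq_refl)) as [z ->]. destruct IH as [l' ->].
    + intros y Hy. apply H. right; auto.
    + exists (z :: l'). auto.
Qed.

Lemma copy_bridge n x0 p q : cadj p q -> (exists y, p = Copy Sp h n y) -> ~ (exists y, q = Copy Sp h n y) ->
  p = Copy Sp h n (basept x0) /\ q = arm_top Sp h n.
Proof.
  intros Hpq [y ->] Hq. destruct Hpq as [Hpq|Hpq]; destruct (comb_edge_cases Sp adjS h _ _ Hpq) as
    [(m & H1 & H2 & E1 & E2)|[(m & t & H1 & H2 & E1 & E2)|[(m & H & x1 & Hx1 & E1 & E2)|(m & x1 & y1 & Hxy & E1 & E2)]]];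
    try discriminate.
  - assert (n = m) by (eapply copy_level_inj; eauto). subst m. exfalso; apply Hq. exists y1; auto.
  - subst q. assert (n = m) by (eapply copy_level_inj; eauto). subst m.
    apply copy_inj in E2. subst x1. split.
    + rewrite Hx1 at 1. rewrite (basept_const y x0). auto.
    + apply arm_eq.
  - assert (n = m) by (symmetry; eapply copy_level_inj; eauto). subst m.
    exfalso; apply Hq. exists x1; auto.
Qed.

Lemma arm_edge_parent p q : (exists n t H, p = Arm Sp h n t H) -> (exists n t H, q = Arm Sp h n t H) -> cadj p q ->
  (q = parent p /\ (depth q < depth p)%nat) \/ (p = parent q /\ (depth p < depth q)%nat).
Proof.
  intros (n & t & H & ->) (m & s & H' & ->) Hpq.
  destruct Hpq as [Hpq|Hpq]; destruct (comb_edge_cases Sp adjS h _ _ Hpq) as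
    [(k & H1 & H2 & E1 & E2)|[(k & u & H1 & H2 & E1 & E2)|[(k & H0 & x1 & Hx1 & E1 & E2)|(k & x1 & y1 & Hxy & E1 & E2)]]];
    try discriminate;
    apply arm_inj in E1 as [? ?]; apply arm_inj in E2 as [? ?]; subst;
    [right|right|left|left]; (split; [simpl; apply arm_eq|simpl; lia]).
Qed.

(** If every [S_n] is acyclic, so is the comb: a cycle meeting a copy of [S_n]
    stays inside it (bridge), and a cycle of arm vertices is impossible (parents). *)
Lemma comb_acyclic : (forall n, acyclic (adjS n)) -> acyclic cadj.
Proof.
  intros Hacy l Hc.
  destruct (classic (exists n x, In (Copy Sp h n x) l)) as [(n & x & Hx)|Hno].
  - set (side := fun p : vertex => exists y, p = Copy Sp h n y).
    assert (Hall : forall y, In y l -> side y).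
    { intros y Hy. apply NNPP; intro Hs.
      apply (cycle_no_bridge vertex cadj (comb_adj_sym Sp adjS h) side
               (Copy Sp h n (basept x)) (arm_top Sp h n) l (copy_bridge n x)); eauto.
      - exists (basept x); auto.
      - exists (Copy Sp h n x); split; auto. exists x; auto. }
    destruct (list_of_map (Copy Sp h n) l Hall) as [l' ->].
    apply (Hacy n l'). apply copy_cycle. auto.
  - apply (parent_depth_acyclic vertex cadj (comb_adj_sym Sp adjS h)
             (fun p => exists n t H, p = Arm Sp h n t H) depth parent l); auto.
    + apply arm_edge_parent.
    + intros p Hp. destruct p as [n t H|n x]; [eauto|]. exfalso. apply Hno. eauto.
Qed.

Lemma arm_at_most_one n t : exists l1 : list vertex, (length l1 <= 1)%nat /\ forall H, In (Arm Sp h n t H) l1.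
Proof.
  destruct (bool_dec (Nat.leb t (h n)) true) as [Eb|Eb].
  - exists [Arm Sp h n t Eb]. split; [simpl; lia|]. intros H. left. apply arm_eq.
  - exists []. split; [simpl; lia|]. intros H. congruence.
Qed.

Lemma base_at_most_one n : exists l1 : list vertex,
  (length l1 <= 1)%nat /\ forall x, x = basept x -> In (Copy Sp h n x) l1.
Proof.
  destruct (classic (exists x0 : Sp n, True)) as [[x0 _]|Hno].
  - exists [Copy Sp h n (basept x0)]. split; [simpl; lia|]. intros x Hx. left.
    rewrite Hx. f_equal. apply basept_const.
  - exists []. split; [simpl; lia|]. intros x _. exfalso; apply Hno; eauto.
Qed.

(** An arm vertex has at most 5 neighbours: the next and previous spine
    vertices, the next and previous arm vertices, and the base of the copy. *)
Lemma arm_neighbours n t H : exists l : list vertex,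
  (length l <= 5)%nat /\ forall y, cadj (Arm Sp h n t H) y -> In y l.
Proof.
  destruct (arm_at_most_one n (S t)) as (o_next & L_next & H_next).
  destruct (base_at_most_one n) as (o_base & L_base & H_base).
  destruct (arm_at_most_one n (t - 1)) as (o_prev & L_prev & H_prev).
  exists ([Arm Sp h (S n) 0 eq_refl] ++ o_next ++ o_base ++ [Arm Sp h (n - 1) 0 eq_refl] ++ o_prev).
  split; [rewrite !length_app; simpl; lia|].
  intros y Hy. rewrite !in_app_iff.
  destruct Hy as [Hy|Hy]; destruct (comb_edge_cases Sp adjS h _ _ Hy) as
      [(k & H1 & H2 & E1 & E2)|[(k & u & H1 & H2 & E1 & E2)|[(k & H0 & x1 & Hx1 & E1 & E2)|(k & x1 & y1 & Hxy & E1 & E2)]]];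
      try discriminate.
  - apply arm_inj in E1 as [? ?]; subst. left. left. apply arm_eq.
  - apply arm_inj in E1 as [? ?]; subst. right; left. apply H_next.
  - apply arm_inj in E1 as [? ?]; subst. right; right; left. apply H_base; auto.
  - subst y. apply arm_inj in E2 as [? ?]; subst. right; right; right; left. left.
    replace (S k - 1)%nat with k by lia. apply arm_eq.
  - subst y. apply arm_inj in E2 as [? ?]; subst. right; right; right; right.
    replace (S u - 1)%nat with u in H_prev by lia. apply H_prev.
Qed.

Lemma copy_neighbours n z lz : (forall y, adjS n z y -> In y lz) ->
  forall y, cadj (Copy Sp h n z) y -> In y (map (Copy Sp h n) lz ++ [arm_top Sp h n]).
Proof.
  intros Hlz y Hy. rewrite in_app_iff.
  destruct Hy as [Hy|Hy]; destruct (comb_edge_cases Sp adjS h _ _ Hy) as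
      [(k & H1 & H2 & E1 & E2)|[(k & u & H1 & H2 & E1 & E2)|[(k & H0 & x1 & Hx1 & E1 & E2)|(k & x1 & y1 & Hxy & E1 & E2)]]];
      try discriminate.
  - assert (n = k) by (eapply copy_level_inj; eauto). subst k. apply copy_inj in E1. subst x1 y.
    left. apply in_map. apply Hlz. auto.
  - subst y. assert (n = k) by (eapply copy_level_inj; eauto). subst k. right. left. apply arm_eq.
  - subst y. assert (n = k) by (eapply copy_level_inj; eauto). subst k. apply copy_inj in E2. subst y1.
    left. apply in_map. apply Hlz. apply (adjS_sym Sp adjS HgS). auto.
Qed.

Lemma comb_degree D : (forall n, degree_le (adjS n) D) -> degree_le cadj (D + 5).
Proof.
  intros HD v. destruct v as [n t H|n z].
  - destruct (arm_neighbours n t H) as (l & Hl & Hin). exists l. split; auto. lia.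
  - destruct (HD n z) as (lz & Lz & Hlz). exists (map (Copy Sp h n) lz ++ [arm_top Sp h n]).
    split; [rewrite length_app, length_map; simpl; lia|]. apply copy_neighbours; auto.
Qed.

End CombShape.

(** Given normalized embeddings [g n] of the [S_n] (1-Lipschitz, co-Lipschitz
    with constant [C], sending the base point to 0), a unit vector [e] and
    Riesz vectors [w n] for growing finite lists [Y n] containing [e], the
    earlier [w m] and the images of the [g m] ([m <= n]), the comb is mapped by
    [Arm n t |-> n e + t w_n] and [Copy n x |-> n e + (h n + 1) w_n + g n x].
    Each vertex is thus described by its level [n], its height along [w_n] and
    its fiber component [g n x]; the Riesz vectors make these coordinates
    stable, which gives the co-Lipschitz bound. *)
Section CombEmbedding.
Variable Sp : nat -> MetricSpace.
Variable adjS : forall n, Sp n -> Sp n -> Prop.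
Hypothesis HgS : forall n, graph_metric (Sp n) (adjS n).
Variable h : nat -> nat.
Hypothesis arm_long : forall n (x : Sp n), ms_dist (Sp n) (basept x) x <= INR (h n).
Variable X : BanachSpace.
Notation "x +: y" := (bs_add X x y) (at level 50, left associativity).
Notation "-: x" := (bs_opp X x) (at level 35).
Notation "a ** x" := (bs_scal X a x) (at level 40).
Notation nm := (bs_norm X).
Notation z0 := (bs_zero X).
Variable g : forall n, Sp n -> X.
Variable C : R.
Hypothesis C_ge0 : 0 <= C.
Hypothesis g_lip : forall n x y, nm (g n x +: -: g n y) <= ms_dist (Sp n) x y.
Hypothesis g_colip : forall n x y, ms_dist (Sp n) x y <= C * nm (g n x +: -: g n y).
Hypothesis g_base : forall n x, g n (basept x) = z0.
Variable e : X.
Variable w : nat -> X.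
Variable Y : nat -> list X.
Hypothesis e_unit : nm e = 1.
Hypothesis w_riesz : forall n, riesz_vector X (Y n) (w n).
Hypothesis Y_e : forall n, span X (Y n) e.
Hypothesis Y_w : forall n m, (m < n)%nat -> span X (Y n) (w m).
Hypothesis Y_g : forall n m x, (m <= n)%nat -> span X (Y n) (g m x).

Notation vertex := (vertex Sp h).
Notation dC := (dC Sp adjS HgS h).

Definition level (p : vertex) : nat :=
  match p with Arm _ _ n _ _ => n | Copy _ _ n _ => n end.
Definition height (p : vertex) : R :=
  match p with Arm _ _ _ t _ => INR t | Copy _ _ n _ => INR (h n) + 1 end.
Definition fiber (p : vertex) : X :=
  match p with Arm _ _ _ _ _ => z0 | Copy _ _ n x => g n x end.

Definition embed (p : vertex) : X :=
  INR (level p) ** e +: height p ** w (level p) +: fiber p.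

Definition embed_const : R := 5 * C + 85.

Lemma g_norm_le n x : nm (g n x) <= ms_dist (Sp n) (basept x) x.
Proof.
  rewrite ms_dist_sym. eapply Rle_trans; [|apply g_lip].
  rewrite g_base. replace (g n x +: -: z0) with (g n x) by vector_eq X [g n x]. lra.
Qed.

Lemma base_dist_le n x : ms_dist (Sp n) (basept x) x <= C * nm (g n x).
Proof.
  rewrite ms_dist_sym. eapply Rle_trans; [apply g_colip|].
  rewrite g_base. replace (g n x +: -: z0) with (g n x) by vector_eq X [g n x]. lra.
Qed.

Lemma height_ge0 p : 0 <= height p.
Proof. destruct p as [n t H|n x]; simpl; [apply pos_INR|pose proof (pos_INR (h n)); lra]. Qed.

Lemma fiber_span p n : (level p <= n)%nat -> span X (Y n) (fiber p).
Proof. destruct p; simpl; intro; [apply span_zero|apply Y_g; auto]. Qed.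

Lemma fiber_norm_le p : nm (fiber p) <= height p.
Proof.
  destruct p as [n t H|n x]; simpl.
  - rewrite norm_zero. apply pos_INR.
  - pose proof (g_norm_le n x). pose proof (arm_long n x). lra.
Qed.

Lemma dist_spine p : dC p (spine Sp h (level p)) <= 2 * height p.
Proof.
  destruct p as [n t H|n x]; simpl.
  - eapply Rle_trans. apply dC_arm. rewrite Rminus_0_r, Rabs_pos_eq by apply pos_INR.
    pose proof (pos_INR t). lra.
  - eapply Rle_trans. apply (dC_tri _ _ _ _ _ (arm_top Sp h n)).
    rewrite dC_sym. pose proof (dC_attach Sp adjS HgS h n x).
    pose proof (dC_arm Sp adjS HgS h n (h n) 0 (leb_of _ _ (le_n _)) eq_refl) as A.
    rewrite Rminus_0_r, Rabs_pos_eq in A by apply pos_INR.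
    pose proof (arm_long n x). unfold arm_top, spine in *. lra.
Qed.

Lemma dist_arm_copy n t H y :
  dC (Arm Sp h n t H) (Copy Sp h n y) <= (INR (h n) + 1 - INR t) + C * nm (g n y).
Proof.
  pose proof (le_INR _ _ (proj1 (Nat.leb_le _ _) H)).
  eapply Rle_trans. apply (dC_tri _ _ _ _ _ (arm_top Sp h n)).
  pose proof (dC_arm Sp adjS HgS h n t (h n) H (leb_of _ _ (le_n _))) as A.
  rewrite Rabs_minus_sym, Rabs_pos_eq in A by lra.
  pose proof (dC_attach Sp adjS HgS h n y). pose proof (base_dist_le n y).
  unfold arm_top in *. lra.
Qed.

Lemma dist_same_level p q : level p = level q ->
  dC p q <= Rabs (height p - height q) + C * nm (fiber p +: -: fiber q).
Proof.
  destruct p as [n t H|n x], q as [m s H'|m y]; simpl; intro Hl; subst m.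
  - rewrite bs_addN, norm_zero, Rmult_0_r, Rplus_0_r. apply dC_arm.
  - replace (z0 +: -: g n y) with (-: g n y) by vector_eq X [g n y].
    rewrite norm_opp. pose proof (le_INR _ _ (proj1 (Nat.leb_le _ _) H)).
    rewrite Rabs_minus_sym, Rabs_pos_eq by lra. apply dist_arm_copy.
  - replace (g n x +: -: z0) with (g n x) by vector_eq X [g n x].
    pose proof (le_INR _ _ (proj1 (Nat.leb_le _ _) H')).
    rewrite Rabs_pos_eq by lra. rewrite dC_sym. apply dist_arm_copy.
  - rewrite Rminus_diag, Rabs_R0, Rplus_0_l.
    eapply Rle_trans; [apply dC_copy|apply g_colip].
Qed.

Lemma colip_same_level p q : level p = level q ->
  dC p q <= embed_const * nm (embed q +: -: embed p).
Proof.
  intro Hl. set (n := level p).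
  assert (Hdiff : embed q +: -: embed p =
                  (height q - height p) ** w n +: (fiber q +: -: fiber p)).
  { unfold embed. rewrite <- Hl. fold n. vector_eq X [e; w n; fiber p; fiber q]. }
  rewrite Hdiff. set (D := nm _).
  assert (Hspan : span X (Y n) (fiber q +: -: fiber p))
    by (apply span_sub; apply fiber_span; unfold n; lia).
  assert (B := riesz_vector_bound X _ _ (height q - height p) _ (w_riesz n) Hspan). fold D in B.
  pose proof (dist_same_level p q Hl) as Hd.
  rewrite Rabs_minus_sym, norm_sub_sym in Hd.
  pose proof (bs_norm_ge0 X (fiber q +: -: fiber p)). pose proof (Rabs_pos (height q - height p)).
  assert (C * nm (fiber q +: -: fiber p) <= C * (5 * D)) by (apply Rmult_le_compat_l; lra).
  unfold embed_const. assert (0 <= D) by (unfold D; apply bs_norm_ge0). nra.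
Qed.

Lemma dist_cross_level p q : (level p <= level q)%nat ->
  dC p q <= 2 * height p + (INR (level q) - INR (level p)) + 2 * height q.
Proof.
  intro Hl. pose proof (dist_spine p). pose proof (dist_spine q).
  pose proof (dC_spine Sp adjS HgS h _ _ Hl).
  eapply Rle_trans. apply (dC_tri _ _ _ _ _ (spine Sp h (level p))).
  eapply Rle_trans. apply Rplus_le_compat_l. apply (dC_tri _ _ _ _ _ (spine Sp h (level q))).
  rewrite (dC_sym _ _ _ _ (spine Sp h (level q))). lra.
Qed.

(** Across levels [n < m], the Riesz property of [w_m] and then of [w_n]
    bound the heights and the level difference by multiples of the distance
    of the images, while the comb distance goes through the spine. *)
Lemma colip_cross_level p q : (level p < level q)%nat ->
  dC p q <= embed_const * nm (embed q +: -: embed p).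
Proof.
  intro Hlt. set (n := level p). set (m := level q).
  set (u := (INR m - INR n) ** e +: -: fiber p).
  set (z' := (- height p) ** w n +: u).
  set (z := z' +: fiber q).
  assert (Hdiff : embed q +: -: embed p = height q ** w m +: z).
  { unfold z, z', u, embed. fold n m. vector_eq X [e; w n; w m; fiber p; fiber q]. }
  rewrite Hdiff. set (D := nm _).
  assert (Hu : span X (Y n) u)
    by (apply span_sub; [apply span_scal, Y_e|apply fiber_span; unfold n; lia]).
  assert (Hz : span X (Y m) z).
  { apply span_add; [apply span_add|apply fiber_span; unfold m; lia].
    - apply span_scal, Y_w. auto.
    - apply span_sub; [apply span_scal, Y_e|apply fiber_span; unfold n, m; lia]. }
  pose proof (height_ge0 p). pose proof (height_ge0 q).
  assert (Bm := riesz_vector_bound X _ _ (height q) _ (w_riesz m) Hz). fold D in Bm.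
  assert (Bn := riesz_vector_bound X _ _ (- height p) _ (w_riesz n) Hu). fold z' in Bn.
  assert (Bu := norm_add_ge X ((INR m - INR n) ** e) (-: fiber p)). fold u in Bu.
  assert (Bz := norm_add_ge X z' (fiber q)). fold z in Bz.
  rewrite bs_normZ, e_unit, norm_opp in Bu.
  rewrite Rabs_Ropp, Rabs_pos_eq in Bn by lra. rewrite Rabs_pos_eq in Bm by lra.
  assert (Hnm : INR n + 1 <= INR m) by (rewrite <- S_INR; apply le_INR; unfold n, m; lia).
  rewrite Rabs_pos_eq, Rmult_1_r in Bu by lra.
  pose proof (fiber_norm_le p). pose proof (fiber_norm_le q).
  pose proof (bs_norm_ge0 X u). pose proof (bs_norm_ge0 X z).
  pose proof (dist_cross_level p q ltac:(lia)) as Hdist. fold n m in Hdist.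
  assert (0 <= C * D) by (apply Rmult_le_pos; auto; apply bs_norm_ge0).
  unfold embed_const. lra.
Qed.

Lemma embed_colipschitz p q : dC p q <= embed_const * bs_dist X (embed p) (embed q).
Proof.
  unfold bs_dist. destruct (Compare_dec.lt_eq_lt_dec (level p) (level q)) as [[Hl|Hl]|Hl].
  - rewrite norm_sub_sym. apply colip_cross_level; auto.
  - rewrite norm_sub_sym. apply colip_same_level; auto.
  - rewrite dC_sym. apply colip_cross_level; auto.
Qed.

Lemma embed_edge p q : comb_edge Sp adjS h p q -> bs_dist X (embed p) (embed q) <= 1.
Proof.
  assert (Hw1 : forall n, nm ((-1) ** w n) <= 1)
    by (intro n; rewrite bs_normZ, (proj1 (w_riesz n)), Rabs_left; lra).
  intro Hpq. unfold bs_dist.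
  destruct Hpq as [n H1 H2|n t H1 H2|n H x Hx|n x y Hxy]; unfold embed; cbn [level height fiber]; rewrite ?S_INR.
  - change (INR 0) with 0.
    replace (INR n ** e +: 0 ** w n +: z0 +: -: ((INR n + 1) ** e +: 0 ** w (S n) +: z0))
        with ((-1) ** e) by vector_eq X [e; w n; w (S n)].
    rewrite bs_normZ, e_unit, Rabs_left; lra.
  - replace (INR n ** e +: INR t ** w n +: z0 +: -: (INR n ** e +: (INR t + 1) ** w n +: z0))
      with ((-1) ** w n) by vector_eq X [e; w n]. auto.
  - rewrite Hx, g_base.
    replace (INR n ** e +: INR (h n) ** w n +: z0 +: -: (INR n ** e +: (INR (h n) + 1) ** w n +: z0))
      with ((-1) ** w n) by vector_eq X [e; w n]. auto.
  - replace (INR n ** e +: (INR (h n) + 1) ** w n +: g n x +: -: (INR n ** e +: (INR (h n) + 1) ** w n +: g n y))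
      with (g n x +: -: g n y) by vector_eq X [e; w n; g n x; g n y].
    eapply Rle_trans. apply g_lip. eapply graph_dist_adj; eauto.
Qed.

Lemma embed_lipschitz p q : bs_dist X (embed p) (embed q) <= dC p q.
Proof.
  destruct (comb_graph Sp adjS HgS h) as (_ & _ & Hg).
  destruct (Hg p q) as (k & Hk & Hwk & _). unfold dC. rewrite Hk.
  apply (walk_dist_le (banach_metric X) (comb_adj Sp adjS h) embed); auto.
  intros a b [Hab|Hab]; [apply embed_edge; auto|].
  simpl. unfold bs_dist. rewrite norm_sub_sym. apply embed_edge; auto.
Qed.

Lemma embed_distortion : distortion_le (Comb Sp adjS HgS h) X embed embed_const.
Proof.
  exists 1, embed_const. split; [|split].
  - split; [lra|]. intros p q. rewrite Rmult_1_l. apply embed_lipschitz.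
  - split; [unfold embed_const; lra|]. apply embed_colipschitz.
  - lra.
Qed.

End CombEmbedding.

Lemma family_choice {A : nat -> Type} (Q : forall n, A n -> Prop) :
  (forall n, exists a, Q n a) -> exists f : forall n, A n, forall n, Q n (f n).
Proof.
  intro H. exists (fun n => proj1_sig (constructive_indefinite_description _ (H n))).
  intro n. exact (proj2_sig (constructive_indefinite_description _ (H n))).
Qed.

Lemma finite_base_radius (M : MetricSpace) :
  finite_metric M -> exists k : nat, forall x : M, ms_dist M (basept x) x <= INR k.
Proof.
  intros [l Hl].
  assert (H : forall l' : list M, exists k : nat, forall x, In x l' -> ms_dist M (basept x) x <= INR k).
  { induction l' as [|a l' IH].
    - exists 0%nat. intros x [].
    - destruct IH as [k1 Hk1]. destruct (INR_unbounded (ms_dist M (basept a) a)) as [k2 Hk2].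
      exists (Nat.max k1 k2). intros x [<-|Hx].
      + pose proof (le_INR _ _ (Nat.le_max_r k1 k2)). lra.
      + pose proof (le_INR _ _ (Nat.le_max_l k1 k2)). specialize (Hk1 x Hx). lra. }
  destruct (H l) as [k Hk]. exists k. auto.
Qed.

Section Normalization.
Variable X : BanachSpace.
Notation "x +: y" := (bs_add X x y) (at level 50, left associativity).
Notation "-: x" := (bs_opp X x) (at level 35).
Notation "a ** x" := (bs_scal X a x) (at level 40).
Notation nm := (bs_norm X).

Definition normalized (M : MetricSpace) (g : M -> X) (C : R) : Prop :=
  (forall x y, nm (g x +: -: g y) <= ms_dist M x y) /\
  (forall x y, ms_dist M x y <= C * nm (g x +: -: g y)) /\
  (forall x, g (basept x) = bs_zero X).

(** Rescaling by [1 / Lip f] and translating the base point to 0 normalizes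
    any embedding of distortion at most [C0]. *)
Lemma normalize_embedding (M : MetricSpace) (f : M -> X) (C0 : R) :
  distortion_le M X f C0 -> exists g, normalized M g (Rmax C0 0).
Proof.
  intros (L1 & L2 & (HL1 & Hl) & (HL2 & Hi) & HLL).
  set (g := fun x => / L1 ** (f x +: -: f (basept x))).
  assert (Hgd : forall x y, g x +: -: g y = / L1 ** (f x +: -: f y)).
  { intros x y. unfold g. rewrite (basept_const y x). vector_eq X [f x; f y; f (basept x)]. }
  exists g. split; [|split].
  - intros x y. rewrite Hgd, bs_normZ. specialize (Hl x y). unfold bs_dist in Hl.
    pose proof (ms_dist_ge0 M x y).
    destruct (Req_dec L1 0) as [E0|E0].
    + rewrite E0, Rinv_0, Rabs_R0. lra.
    + rewrite Rabs_pos_eq by (left; apply Rinv_0_lt_compat; lra).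
      apply (Rmult_le_reg_l L1); [lra|]. rewrite <- Rmult_assoc, Rinv_r by auto. lra.
  - intros x y. rewrite Hgd, bs_normZ. specialize (Hl x y). specialize (Hi x y).
    unfold bs_dist in Hl, Hi. set (nf := nm (f x +: -: f y)) in *.
    pose proof (bs_norm_ge0 X (f x +: -: f y)). fold nf in H.
    pose proof (Rmax_l C0 0). pose proof (Rmax_r C0 0).
    destruct (Req_dec L1 0) as [E0|E0].
    + rewrite E0 in Hl. assert (nf = 0) by lra.
      rewrite E0, Rinv_0, Rabs_R0, Rmult_0_l, Rmult_0_r. subst nf. nra.
    + rewrite Rabs_pos_eq by (left; apply Rinv_0_lt_compat; lra).
      assert (Hq : nf = L1 * (/ L1 * nf)) by (field; auto).
      assert (0 <= / L1 * nf) by (apply Rmult_le_pos; [left; apply Rinv_0_lt_compat|]; lra).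
      rewrite Hq in Hi. nra.
  - intro x. unfold g. rewrite (basept_const (basept x) x), bs_addN. apply bs_scal0r.
Qed.

Lemma riesz_frame (cloud : nat -> list X) : ~ finite_dimensional X ->
  exists (e : X) (w : nat -> X) (Y : nat -> list X),
    nm e = 1 /\ (forall n, riesz_vector X (Y n) (w n)) /\ (forall n, span X (Y n) e) /\
    (forall n m, (m < n)%nat -> span X (Y n) (w m)) /\
    (forall n m x, (m <= n)%nat -> In x (cloud m) -> span X (Y n) x).
Proof.
  intro Hfd.
  set (r := fun l => proj1_sig (constructive_indefinite_description _ (riesz X Hfd l))).
  assert (Hr : forall l, riesz_vector X l (r l))
    by (intro l; exact (proj2_sig (constructive_indefinite_description _ (riesz X Hfd l)))).
  set (e := r []).
  set (Y := fix Y n := match n with O => e :: cloud O | S k => r (Y k) :: cloud (S k) ++ Y k end).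
  assert (Ymono : forall m n, (m <= n)%nat -> incl (Y m) (Y n)).
  { intros m n Hmn. induction Hmn; [apply incl_refl|]. eapply incl_tran; eauto.
    simpl. intros a Ha. right. apply in_app_iff. right. auto. }
  exists e, (fun n => r (Y n)), Y. split; [|split; [|split; [|split]]].
  - apply (Hr []).
  - intro n. apply Hr.
  - intro n. apply span_in, (Ymono 0%nat n ltac:(lia)). left; auto.
  - intros n m Hmn. apply span_in, (Ymono (S m) n Hmn). left; auto.
  - intros n m x Hmn Hx. apply span_in, (Ymono m n Hmn). destruct m; simpl.
    + right. auto.
    + right. apply in_app_iff. left. auto.
Qed.

End Normalization.

(** An embedding of the comb restricts to an embedding of each [S_n] with
    the same distortion, the copies being isometric. *)
Lemma copy_restriction Sp adjS HgS h (X : BanachSpace) f C n :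
  distortion_le (Comb Sp adjS HgS h) X f C -> distortion_le (Sp n) X (fun x => f (Copy Sp h n x)) C.
Proof.
  intros (L1 & L2 & (HL1 & Hl) & (HL2 & Hi) & HLL). exists L1, L2. split; [|split; auto].
  - split; auto. intros x y. rewrite <- (copy_isometric Sp adjS HgS h). apply Hl.
  - split; auto. intros x y. rewrite <- (copy_isometric Sp adjS HgS h). apply Hi.
Qed.

(** The comb over test-spaces [S_n] (with arms longer than their radii) is a
    single test-space: a space outside [P] is infinite-dimensional and so
    contains the comb by [embed]; conversely the comb contains every [S_n]. *)
Lemma comb_test_space (P : BanachSpace -> Prop)
  (HP : forall X, finite_dimensional X -> P X)
  (Sp : nat -> MetricSpace) (adjS : forall n, Sp n -> Sp n -> Prop)
  (HgS : forall n, graph_metric (Sp n) (adjS n)) (h : nat -> nat)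
  (arm_long : forall n (x : Sp n), ms_dist (Sp n) (basept x) x <= INR (h n)) :
  (forall n, finite_metric (Sp n)) -> test_spaces P Sp -> test_space P (Comb Sp adjS HgS h).
Proof.
  intros Hfin Hts X. split.
  - intro HnP. destruct (proj1 (Hts X) HnP) as [C0 HC0].
    assert (Hfd : ~ finite_dimensional X) by (intro; apply HnP; auto).
    destruct (family_choice (A := fun n => Sp n -> X) (fun n g => normalized X (Sp n) g (Rmax C0 0)))
      as [g Hg].
    { intro n. destruct (HC0 n) as [f Hf]. exact (normalize_embedding X _ f C0 Hf). }
    destruct (family_choice (A := fun n => list (Sp n)) (fun n l => forall x, In x l) Hfin) as [pts Hpts].
    destruct (riesz_frame X (fun n => map (g n) (pts n)) Hfd)
      as (e & w & Y & He & Hw & HYe & HYw & HYg).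
    exists (embed_const (Rmax C0 0)). intros _. exists (embed Sp h X g e w).
    apply (embed_distortion Sp adjS HgS h arm_long X g _ (Rmax_r C0 0)) with (Y := Y);
      try (intro n; apply Hg); auto.
    intros n m x Hmn. apply (HYg n m); auto. apply in_map, Hpts.
  - intros [C HC]. apply (proj2 (Hts X)). exists C. intro n.
    destruct (HC tt) as [f Hf]. eexists. apply copy_restriction; eauto.
Qed.

Theorem mainTheorem15 :
  forall (P : BanachSpace -> Prop),
    (forall X : BanachSpace, finite_dimensional X -> P X) ->
  forall (S : nat -> MetricSpace),
    (forall n, finite_metric (S n)) ->
    test_spaces P S ->
    (* (i) connected unweighted graphs *)
    ((forall n, exists adj, graph_metric (S n) adj) ->
       exists (T : MetricSpace) (adj : T -> T -> Prop),
         graph_metric T adj /\ test_space P T)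
    /\
    (* (ii) trees *)
    ((forall n, exists adj, tree_metric (S n) adj) ->
       exists (T : MetricSpace) (adj : T -> T -> Prop),
         tree_metric T adj /\ test_space P T)
    /\
    (* (iii) connected graphs with uniformly bounded degrees *)
    ((exists D : nat, forall n, exists adj, graph_metric (S n) adj /\ degree_le adj D) ->
       exists (T : MetricSpace) (adj : T -> T -> Prop) (D' : nat),
         graph_metric T adj /\ degree_le adj D' /\ test_space P T).
Proof.
  intros P HP S Hfin Hts.
  destruct (family_choice (A := fun _ => nat) (fun n k => forall x : S n, ms_dist (S n) (basept x) x <= INR k))
    as [h Hh]; [intro n; apply finite_base_radius, Hfin|].
  split; [|split].
  - intro Had. destruct (family_choice _ Had) as [adjS HgS].
    exists (Comb S adjS HgS h), (comb_adj S adjS h).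
    split; [apply comb_graph|apply comb_test_space; auto].
  - intro Had. destruct (family_choice _ Had) as [adjS Htree].
    set (HgS := fun n => proj1 (Htree n)).
    exists (Comb S adjS HgS h), (comb_adj S adjS h). split; [split|].
    + apply comb_graph.
    + apply (comb_acyclic S adjS HgS h). intro n. apply Htree.
    + apply comb_test_space; auto.
  - intros [D Had]. destruct (family_choice _ Had) as [adjS Hbdd].
    set (HgS := fun n => proj1 (Hbdd n)).
    exists (Comb S adjS HgS h), (comb_adj S adjS h), (D + 5)%nat. split; [|split].
    + apply comb_graph.
    + apply (comb_degree S adjS HgS h D). intro n. apply Hbdd.
    + apply comb_test_space; auto.
Qed.
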